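(* Let $s>0$, $\nu>0$, $\Lambda>1$, $\varepsilon_c>0$ and $\varepsilon\in\mathbb{R}$ be real constants, and put $\lambda=1+1/s$. For $\Lambda'>0$ let $g_{\Lambda'}(\xi)=\xi^{3}+(1+s)\nu\xi^{2}-\Lambda'\xi-s\nu\Lambda'$, and let $\xi_{\Lambda}$ and $\xi_1$ denote the unique positive real roots of $g_{\Lambda}$ and $g_{1}$ respectively. Suppose $f:\mathbb{R}\to\mathbb{R}$ is three times differentiable on $(-\infty,0)$ and on $[0,\infty)$ with one-sided limits of $f,f',f''$ at $0$ from each side, and satisfies $$0=f(\chi)-(1+s)\nu f'(\chi)-\Lambda f''(\chi)+s\nu\Lambda f'''(\chi)\quad(\chi<0),$$ $$0=f(\chi)-\varepsilon-(1+s)\nu f'(\chi)-f''(\chi)+s\nu f'''(\chi)\quad(\chi\ge 0),$$ together with the conditions $$f(-0)-s\nu f'(-0)=f(+0)-s\nu f'(+0)=\frac{\Lambda\varepsilon-\varepsilon_c}{\Lambda-1},\quad f'(-0)=f'(+0),\quad f''(-0)=f''(+0),\quad \lim_{\chi\to-\infty}f(\chi)=0,\quad \lim_{\chi\to+\infty}f(\chi)=\varepsilon,$$ where $h(\pm0)$ denotes the one-sided limit of $h$ at $0$. Then $$\tilde{\varepsilon}\equiv\frac{\varepsilon}{\varepsilon_c}=\frac{\nu\left(1+s+\frac{s\Lambda}{\xi_1\xi_\Lambda}\right)+\xi_1+\xi_\Lambda}{\nu\left(1+s\Lambda+\frac{s\Lambda}{\xi_1\xi_\Lambda}\right)+\L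ambda\xi_1+\xi_\Lambda}=\frac{\frac{\nu}{\lambda-1}\left(\frac{\Lambda}{\xi_1\xi_\Lambda}+\lambda\right)+\xi_1+\xi_\Lambda}{\frac{\nu}{\lambda-1}\left(\Lambda+\frac{\Lambda}{\xi_1\xi_\Lambda}+\lambda-1\right)+\Lambda\xi_1+\xi_\Lambda}.$$
   Context: This is the steady-state (constant crack velocity) problem for a minimal viscoelastic crack model built from Zener elements: $f$ is the dashpot strain profile in the co-moving coordinate $\chi$ (crack tip at $\chi=0$), $\nu>0$ is the dimensionless crack velocity, $s=E_0/E_1$ is a ratio of spring moduli, $\Lambda=L/l$ is the ratio of sheet height to lattice spacing, $\varepsilon$ is the applied global strain and $\varepsilon_c$ the critical breaking strain. For $s,\nu,\Lambda'>0$ the cubic $g_{\Lambda'}$ has exactly one positive real root (and two negative ones). The paper also records the positive root $\xi_\Lambda$ explicitly via Cardano's formula. *)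

From Stdlib Require Import Reals.
From Coquelicot Require Import Coquelicot.
Open Scope R_scope.

Definition gcub (s nu L' xi : R) : R :=
  xi ^ 3 + (1 + s) * nu * xi ^ 2 - L' * xi - s * nu * L'.

Definition is_right_derive (g : R -> R) (x l : R) : Prop :=
  filterlim (fun h => (g (x + h) - g x) / h) (at_right 0) (locally l).

(* On each half-line f solves a linear third-order ODE with constant coefficients
   whose characteristic roots are -1/xi for the three real roots xi of g_1 (for f - eps
   on the right) and of g_Lam (for f on the left).  Each g has exactly one positive root,
   so the limits at +oo and -oo kill two modes on the right and one mode on the left.
   This gives f' = -(f - eps)/xi_1 and f'' = (f - eps)/xi_1^2 at +0 and one linear
   relation between f, f', f'' at -0.  With the matching conditions at 0 this is a
   linear system whose consistency fixes eps/eps_c, and g_Lam(xi_Lam) = 0 brings the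
   result into the stated form. *)

From Stdlib Require Import Reals Lra.
From Coquelicot Require Import Coquelicot.
Open Scope R_scope.

Lemma quadratic_roots_around (B C t : R) :
  t * t + B * t + C < 0 -> exists p q, p < t < q /\ p + q = - B /\ p * q = C.
Proof.
  intros Ht.
  set (D := B * B - 4 * C).
  assert (HD : (2 * t + B) * (2 * t + B) < D) by (unfold D; lra).
  assert (HD0 : 0 <= D) by (pose proof (Rle_0_sqr (2 * t + B)); unfold Rsqr in *; lra).
  assert (Hs : sqrt D * sqrt D = D) by (apply sqrt_sqrt; exact HD0).
  assert (Hlt : Rabs (2 * t + B) < sqrt D).
  { rewrite <- (Rabs_pos_eq (sqrt D)) by apply sqrt_pos.
    apply Rsqr_lt_abs_0. unfold Rsqr. lra. }
  exists ((- B - sqrt D) / 2), ((- B + sqrt D) / 2).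
  destruct (Rabs_def2 _ _ Hlt).
  repeat split; try lra.
  transitivity ((B * B - sqrt D * sqrt D) / 4); [field | rewrite Hs; unfold D; field].
Qed.

Lemma cubic_other_roots (e1 e2 e3 r t : R) :
  r ^ 3 - e1 * r ^ 2 + e2 * r - e3 = 0 ->
  (t - r) * (t ^ 3 - e1 * t ^ 2 + e2 * t - e3) < 0 ->
  exists p q, p < t < q /\
    p + q + r = e1 /\ p * q + q * r + r * p = e2 /\ p * q * r = e3.
Proof.
  intros Hr Ht.
  set (B := r - e1). set (C := e2 - r * e1 + r * r).
  assert (Hfactor : t ^ 3 - e1 * t ^ 2 + e2 * t - e3 = (t - r) * (t * t + B * t + C)).
  { transitivity ((t - r) * (t * t + B * t + C) + (r ^ 3 - e1 * r ^ 2 + e2 * r - e3)).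
    - unfold B, C. ring.
    - rewrite Hr. ring. }
  assert (Hq : t * t + B * t + C < 0).
  { rewrite Hfactor in Ht.
    destruct (Rlt_or_le (t * t + B * t + C) 0) as [H | H]; [exact H |].
    exfalso. pose proof (Rle_0_sqr (t - r)). unfold Rsqr in *. nra. }
  destruct (quadratic_roots_around B C t Hq) as [p [q [Hpq [Hsum Hprod]]]].
  exists p, q. split; [exact Hpq |]. split; [unfold B in Hsum; lra |]. split.
  - replace (p * q + q * r + r * p) with (p * q + r * (p + q)) by ring.
    rewrite Hsum, Hprod. unfold B, C. ring.
  - rewrite Hprod. unfold C. lra.
Qed.

Lemma filterlim_Rplus_fun {T} {F : (T -> Prop) -> Prop} {FF : Filter F}
  (f g : T -> R) (x y : R) :
  filterlim f F (locally x) -> filterlim g F (locally y) ->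
  filterlim (fun t => f t + g t) F (locally (x + y)).
Proof. intros Hf Hg. exact (filterlim_comp_2 f g Rplus Hf Hg (filterlim_plus x y)). Qed.

Lemma filterlim_Rmult_fun {T} {F : (T -> Prop) -> Prop} {FF : Filter F}
  (f g : T -> R) (x y : R) :
  filterlim f F (locally x) -> filterlim g F (locally y) ->
  filterlim (fun t => f t * g t) F (locally (x * y)).
Proof. intros Hf Hg. exact (filterlim_comp_2 f g Rmult Hf Hg (filterlim_mult x y)). Qed.

Lemma exp_solution_unique (c Z0 : R) (Z : R -> R) :
  (forall x, 0 < x -> is_derive Z x (c * Z x)) ->
  filterlim Z (at_right 0) (locally Z0) ->
  forall x, 0 < x -> Z x = Z0 * exp (c * x).
Proof.
  intros DZ LZ.
  set (h := fun x => exp (- c * x) * Z x).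
  assert (Dh : forall x, 0 < x -> is_derive h x 0).
  { intros x Hx. unfold h. auto_derive.
    - exists (c * Z x). exact (DZ x Hx).
    - replace (Derive (fun y => Z y) x) with (c * Z x)
        by (symmetry; exact (is_derive_unique _ _ _ (DZ x Hx))).
      ring. }
  assert (Hmono : forall x y, 0 < x -> x < y -> h x = h y).
  { intros x y Hx Hxy.
    destruct (MVT_cor2 h (fun _ => 0) x y Hxy) as [t [Ht _]].
    - intros t Ht. apply is_derive_Reals, Dh. lra.
    - lra. }
  set (K := h 1).
  assert (HZ : forall x, 0 < x -> Z x = K * exp (c * x)).
  { intros x Hx.
    assert (Hh : h x = K).
    { destruct (Rtotal_order x 1) as [H | [H | H]].
      - apply Hmono; lra.
      - subst x. reflexivity.
      - symmetry. apply Hmono; lra. }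
    rewrite <- Hh. unfold h.
    replace (- c * x) with (- (c * x)) by ring. rewrite exp_Ropp.
    field. apply Rgt_not_eq, exp_pos. }
  assert (LK : filterlim Z (at_right 0) (locally K)).
  { apply (filterlim_ext_loc (fun x => K * exp (c * x))).
    - exists (mkposreal 1 Rlt_0_1). intros y _ Hy. symmetry. exact (HZ y Hy).
    - assert (Hcont : filterlim (fun x => K * exp (c * x)) (locally 0)
                        (locally (K * exp (c * 0)))).
      { apply (ex_derive_continuous (fun x => K * exp (c * x))). auto_derive. exact I. }
      rewrite Rmult_0_r, exp_0, Rmult_1_r in Hcont.
      exact (filterlim_filter_le_1 _ (filter_le_within _) Hcont). }
  intros x Hx. rewrite (HZ x Hx). f_equal.
  exact (filterlim_locally_unique _ _ _ LK LZ).
Qed.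

Lemma is_lim_exp_neg_slope (k : R) : k < 0 -> is_lim (fun x => exp (k * x)) p_infty 0.
Proof.
  intros Hk.
  apply (is_lim_comp exp (fun x => k * x) p_infty 0 m_infty is_lim_exp_m).
  - replace m_infty with (Rbar_mult k p_infty).
    + apply is_lim_scal_l, is_lim_id.
    + simpl. destruct (Rle_dec 0 k); [exfalso; lra | reflexivity].
  - exists 0. intros; discriminate.
Qed.

Lemma exp_sum_top_coeff_zero (a b c C0 C1 C2 : R) (u : R -> R) :
  a < c -> b < c -> 0 < c -> is_lim u p_infty 0 ->
  (forall x, 0 < x -> u x = C0 * exp (c * x) + C1 * exp (a * x) + C2 * exp (b * x)) ->
  C0 = 0.
Proof.
  intros Hac Hbc Hc Hu Hform.
  set (damped := fun x => C0 + C1 * exp ((a - c) * x) + C2 * exp ((b - c) * x)).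
  assert (Hto0 : is_lim damped p_infty 0).
  { apply (is_lim_ext_loc (fun x => u x * exp (- c * x))).
    - exists 0. intros x Hx. unfold damped. rewrite Hform by lra.
      replace ((a - c) * x) with (a * x + - (c * x)) by ring.
      replace ((b - c) * x) with (b * x + - (c * x)) by ring.
      replace (- c * x) with (- (c * x)) by ring.
      rewrite !exp_plus, !exp_Ropp.
      field. apply Rgt_not_eq, exp_pos.
    - replace (Finite 0) with (Rbar_mult 0 0) by (simpl; f_equal; ring).
      apply is_lim_mult; [exact Hu | apply is_lim_exp_neg_slope; lra | simpl; auto]. }
  assert (HtoC0 : is_lim damped p_infty (C0 + C1 * 0 + C2 * 0)).
  { apply is_lim_plus'; [apply is_lim_plus'; [apply is_lim_const |] |];
      apply (is_lim_scal_l _ _ _ (Finite 0)), is_lim_exp_neg_slope; lra. }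
  apply is_lim_unique in Hto0. apply is_lim_unique in HtoC0.
  rewrite Hto0 in HtoC0. injection HtoC0. lra.
Qed.

(* [(D - p) (D - q)] applied to a function whose 2-jet at a point is [(y0, y1, y2)]. *)
Definition factor_op (p q y0 y1 y2 : R) : R := y2 - (p + q) * y1 + p * q * y0.

Section DecayingSolutions.

Variables (e1 e2 e3 U0 U1 U2 : R) (u u1 u2 u3 : R -> R).

Hypothesis derivs : forall x, 0 < x ->
  is_derive u x (u1 x) /\ is_derive u1 x (u2 x) /\ is_derive u2 x (u3 x).
Hypothesis ode : forall x, 0 < x -> u3 x - e1 * u2 x + e2 * u1 x - e3 * u x = 0.
Hypothesis lim_u : filterlim u (at_right 0) (locally U0).
Hypothesis lim_u1 : filterlim u1 (at_right 0) (locally U1).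
Hypothesis lim_u2 : filterlim u2 (at_right 0) (locally U2).

Lemma factor_op_exp (p q r : R) :
  p + q + r = e1 -> p * q + q * r + r * p = e2 -> p * q * r = e3 ->
  forall x, 0 < x ->
  factor_op p q (u x) (u1 x) (u2 x) = factor_op p q U0 U1 U2 * exp (r * x).
Proof.
  intros V1 V2 V3.
  apply (exp_solution_unique r _ (fun x => factor_op p q (u x) (u1 x) (u2 x))).
  - intros x Hx. destruct (derivs x Hx) as [D0 [D1 D2]].
    replace (r * factor_op p q (u x) (u1 x) (u2 x))
      with (u3 x - (p + q) * u2 x + p * q * u1 x).
    + exact (is_derive_plus _ _ _ _ _
               (is_derive_minus _ _ _ _ _ D2 (is_derive_scal _ _ (p + q) _ D1))
               (is_derive_scal _ _ (p * q) _ D0)).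
    + unfold factor_op. pose proof (ode x Hx). subst e1 e2 e3. lra.
  - unfold factor_op.
    replace (U2 - (p + q) * U1 + p * q * U0) with (U2 + - (p + q) * U1 + p * q * U0) by ring.
    apply (filterlim_ext (fun x => u2 x + - (p + q) * u1 x + p * q * u x));
      [intros x; ring |].
    apply filterlim_Rplus_fun; [apply filterlim_Rplus_fun; [exact lim_u2 |] |];
      (apply filterlim_Rmult_fun; [apply filterlim_const | assumption]).
Qed.

Variables a b c : R.
Hypothesis sum_roots : a + b + c = e1.
Hypothesis sum_root_pairs : a * b + b * c + c * a = e2.
Hypothesis prod_roots : a * b * c = e3.
Hypothesis lt_ab : a < b.
Hypothesis lt_bc : b < c.

(* By [factor_op_exp] each [(D - a)(D - b) u] is a single exponential, and Lagrange
   interpolation at the nodes a, b, c recovers u from these three quadratic factors. *)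
Lemma exp_sum_representation x : 0 < x ->
  u x = factor_op a b U0 U1 U2 / ((c - a) * (c - b)) * exp (c * x)
      + factor_op b c U0 U1 U2 / ((a - b) * (a - c)) * exp (a * x)
      + factor_op c a U0 U1 U2 / ((b - c) * (b - a)) * exp (b * x).
Proof.
  intros Hx.
  assert (Hlagrange :
    u x = factor_op a b (u x) (u1 x) (u2 x) / ((c - a) * (c - b))
        + factor_op b c (u x) (u1 x) (u2 x) / ((a - b) * (a - c))
        + factor_op c a (u x) (u1 x) (u2 x) / ((b - c) * (b - a))).
  { unfold factor_op. field. repeat split; lra. }
  rewrite Hlagrange, (factor_op_exp a b c), (factor_op_exp b c a), (factor_op_exp c a b)
    by lra.
  unfold Rdiv. ring.
Qed.

Hypothesis decays : is_lim u p_infty 0.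

Lemma decaying_top_mode : 0 < c -> factor_op a b U0 U1 U2 = 0.
Proof.
  intros Hc.
  assert (Htop := exp_sum_top_coeff_zero a b c _ _ _ u
                    ltac:(lra) ltac:(lra) Hc decays exp_sum_representation).
  replace (factor_op a b U0 U1 U2)
    with (factor_op a b U0 U1 U2 / ((c - a) * (c - b)) * ((c - a) * (c - b)))
    by (field; lra).
  rewrite Htop. ring.
Qed.

Lemma decaying_single_mode : 0 < b -> U1 = a * U0 /\ U2 = a * a * U0.
Proof.
  intros Hb.
  assert (Hab := decaying_top_mode ltac:(lra)).
  assert (Hca : factor_op c a U0 U1 U2 / ((b - c) * (b - a)) = 0).
  { apply (exp_sum_top_coeff_zero a a b _ (factor_op b c U0 U1 U2 / ((a - b) * (a - c))) 0 u
             lt_ab lt_ab Hb decays).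
    intros x Hx. rewrite (exp_sum_representation x Hx), Hab. unfold Rdiv. ring. }
  assert (Hca' : factor_op c a U0 U1 U2 = 0).
  { replace (factor_op c a U0 U1 U2)
      with (factor_op c a U0 U1 U2 / ((b - c) * (b - a)) * ((b - c) * (b - a)))
      by (field; lra).
    rewrite Hca. ring. }
  unfold factor_op in Hab, Hca'.
  assert (Hdiff : (c - b) * (U1 - a * U0) = 0) by lra.
  assert (HU1 : U1 = a * U0) by (apply Rmult_integral in Hdiff; lra).
  split; [exact HU1 | rewrite HU1 in Hab; lra].
Qed.

End DecayingSolutions.

Lemma is_derive_reflect (g : R -> R) (x l : R) :
  is_derive g (- x) l -> is_derive (fun y => g (- y)) x (- l).
Proof.
  intros D. auto_derive.
  - exists l. exact D.
  - replace (Derive (fun y => g y) (- x)) with l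
      by (symmetry; exact (is_derive_unique _ _ _ D)).
    ring.
Qed.

Lemma is_derive_reflect_opp (g : R -> R) (x l : R) :
  is_derive g (- x) l -> is_derive (fun y => - g (- y)) x l.
Proof.
  intros D. rewrite <- (Ropp_involutive l).
  exact (is_derive_opp _ _ _ (is_derive_reflect g x l D)).
Qed.

Lemma filterlim_reflect_right (g : R -> R) (l : R) :
  filterlim g (at_left 0) (locally l) -> filterlim (fun y => g (- y)) (at_right 0) (locally l).
Proof.
  intros H. eapply filterlim_comp; [apply filterlim_Ropp_right |].
  rewrite Ropp_0. exact H.
Qed.

Lemma filterlim_reflect_right_opp (g : R -> R) (l : R) :
  filterlim g (at_left 0) (locally l) ->
  filterlim (fun y => - g (- y)) (at_right 0) (locally (- l)).
Proof.
  intros H.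
  exact (filterlim_comp _ _ _ _ _ _ _ _ (filterlim_reflect_right g l H)
           (filterlim_opp (V := R_NormedModule) l)).
Qed.

Lemma is_lim_reflect (g : R -> R) (l : Rbar) :
  is_lim g m_infty l -> is_lim (fun y => g (- y)) p_infty l.
Proof.
  intros H. apply (is_lim_comp g (fun y => - y) p_infty l m_infty H).
  - apply (is_lim_opp (fun y => y) p_infty p_infty), is_lim_id.
  - exists 0. intros; discriminate.
Qed.

(* The coefficients are those of the characteristic polynomial of the right-hand ODE
   for f - eps, divided by s nu; its roots are -1/xi for the roots xi of g_1. *)
Lemma char_roots_right (s nu xi1 : R) :
  0 < s -> 0 < nu -> 0 < xi1 -> gcub s nu 1 xi1 = 0 ->
  exists b c, - 1 / xi1 < b < c /\ 0 < b /\
    - 1 / xi1 + b + c = 1 / (s * nu) /\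
    - 1 / xi1 * b + b * c + c * (- 1 / xi1) = - (1 + s) * nu / (s * nu) /\
    - 1 / xi1 * b * c = - 1 / (s * nu).
Proof.
  intros hs hnu hxi1 hg1.
  assert (hk : 0 < s * nu) by nra.
  set (k := s * nu) in *.
  destruct (cubic_other_roots (1 / k) (- (1 + s) * nu / k) (- 1 / k) (- 1 / xi1) (1 / k))
    as (p & q & [Hp Hq] & V1 & V2 & V3).
  - transitivity (gcub s nu 1 xi1 / (k * xi1 ^ 3)).
    + unfold gcub, k. field. lra.
    + rewrite hg1. unfold Rdiv. ring.
  - replace ((1 / k - - 1 / xi1) * ((1 / k) ^ 3 - 1 / k * (1 / k) ^ 2
              + - (1 + s) * nu / k * (1 / k) - - 1 / k))
      with (- (nu * (xi1 + k) / (k ^ 3 * xi1))) by (unfold k; field; lra).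
    assert (0 < nu * (xi1 + k) / (k ^ 3 * xi1)).
    { apply Rdiv_lt_0_compat; [nra | apply Rmult_lt_0_compat; [apply pow_lt |]; lra]. }
    lra.
  - assert (Hr : - 1 / xi1 < 0).
    { assert (0 < 1 / xi1) by (apply Rdiv_lt_0_compat; lra).
      replace (- 1 / xi1) with (- (1 / xi1)) by (field; lra). lra. }
    assert (Hq0 : 0 < q) by (assert (0 < 1 / k) by (apply Rdiv_lt_0_compat; lra); lra).
    assert (Hp0 : 0 < p).
    { assert (Hpq : p * q = xi1 / k).
      { apply (Rmult_eq_reg_r (- 1 / xi1)); [rewrite V3; field; lra | lra]. }
      assert (0 < xi1 / k) by (apply Rdiv_lt_0_compat; lra). nra. }
    exists p, q. repeat split; lra.
Qed.

(* The coefficients are those of the characteristic polynomial of the left-hand ODE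
   for f(-x), divided by -s nu Lam; its roots are 1/xi for the roots xi of g_Lam. *)
Lemma char_roots_left (s nu Lam xiL : R) :
  0 < s -> 0 < nu -> 0 < Lam -> 0 < xiL -> gcub s nu Lam xiL = 0 ->
  exists a b, a < b < 1 / xiL /\
    a + b + 1 / xiL = - 1 / (s * nu) /\
    a * b + b * (1 / xiL) + 1 / xiL * a = - (1 + s) * nu / (s * nu * Lam) /\
    a * b * (1 / xiL) = 1 / (s * nu * Lam).
Proof.
  intros hs hnu hLam hxiL hgL.
  assert (hk : 0 < s * nu) by nra.
  set (k := s * nu) in *.
  destruct (cubic_other_roots (- 1 / k) (- (1 + s) * nu / (k * Lam)) (1 / (k * Lam))
              (1 / xiL) (- 1 / k))
    as (p & q & [Hp Hq] & V1 & V2 & V3).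
  - transitivity (- gcub s nu Lam xiL / (k * Lam * xiL ^ 3)).
    + unfold gcub, k. field. lra.
    + rewrite hgL. unfold Rdiv. ring.
  - replace ((- 1 / k - 1 / xiL) * ((- 1 / k) ^ 3 - - 1 / k * (- 1 / k) ^ 2
              + - (1 + s) * nu / (k * Lam) * (- 1 / k) - 1 / (k * Lam)))
      with (- (nu * (xiL + k) / (k ^ 3 * Lam * xiL))) by (unfold k; field; lra).
    assert (0 < nu * (xiL + k) / (k ^ 3 * Lam * xiL)).
    { apply Rdiv_lt_0_compat; [nra |].
      apply Rmult_lt_0_compat; [apply Rmult_lt_0_compat; [apply pow_lt |] |]; lra. }
    lra.
  - assert (Hr : 0 < 1 / xiL) by (apply Rdiv_lt_0_compat; lra).
    assert (Hpq : p * q = xiL / (k * Lam)).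
    { apply (Rmult_eq_reg_r (1 / xiL)); [rewrite V3; field; lra | lra]. }
    assert (Hp0 : p < 0).
    { assert (0 < 1 / k) by (apply Rdiv_lt_0_compat; lra).
      replace (- 1 / k) with (- (1 / k)) in Hp by (field; lra). lra. }
    assert (Hq0 : q < 0).
    { assert (0 < xiL / (k * Lam)) by (apply Rdiv_lt_0_compat; nra). nra. }
    exists p, q. repeat split; lra.
Qed.

Lemma right_interface_relations (s nu eps xi1 fp0 f1p0 f2p0 : R) (f f1 f2 f3 : R -> R) :
  0 < s -> 0 < nu -> 0 < xi1 -> gcub s nu 1 xi1 = 0 ->
  (forall x, 0 < x ->
     is_derive f x (f1 x) /\ is_derive f1 x (f2 x) /\ is_derive f2 x (f3 x)) ->
  (forall x, 0 < x -> 0 = f x - eps - (1 + s) * nu * f1 x - f2 x + s * nu * f3 x) ->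
  filterlim f (at_right 0) (locally fp0) ->
  filterlim f1 (at_right 0) (locally f1p0) ->
  filterlim f2 (at_right 0) (locally f2p0) ->
  is_lim f p_infty eps ->
  f1p0 = - (fp0 - eps) / xi1 /\ f2p0 = (fp0 - eps) / xi1 ^ 2.
Proof.
  intros hs hnu hxi1 hg1 derivs ode lim_f lim_f1 lim_f2 lim_inf.
  destruct (char_roots_right s nu xi1 hs hnu hxi1 hg1)
    as (b & c & [Hab Hbc] & Hb & V1 & V2 & V3).
  destruct (decaying_single_mode (1 / (s * nu)) (- (1 + s) * nu / (s * nu)) (- 1 / (s * nu))
              (fp0 - eps) f1p0 f2p0 (fun x => f x - eps) f1 f2 f3) with
    (a := - 1 / xi1) (b := b) (c := c) as [Hf1 Hf2]; try assumption.
  - intros x Hx. destruct (derivs x Hx) as [D0 [D1 D2]].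
    split; [| split]; try assumption.
    replace (f1 x) with (f1 x - 0) by ring.
    apply (is_derive_minus f (fun _ => eps));
      [exact D0 | exact (is_derive_const (K := R_AbsRing) eps x)].
  - intros x Hx.
    transitivity ((1 / (s * nu))
                  * (f x - eps - (1 + s) * nu * f1 x - f2 x + s * nu * f3 x)).
    + field. nra.
    + rewrite <- (ode x Hx). ring.
  - exact (filterlim_Rplus_fun f (fun _ => - eps) _ _ lim_f (filterlim_const _)).
  - replace (Finite 0) with (Finite (eps - eps)) by (f_equal; ring).
    exact (is_lim_minus' f (fun _ => eps) p_infty eps eps lim_inf (is_lim_const eps _)).
  - split; [rewrite Hf1 | rewrite Hf2]; field; lra.
Qed.

Lemma left_interface_relation (s nu Lam xiL fm0 f1m0 f2m0 : R) (f f1 f2 f3 : R -> R) :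
  0 < s -> 0 < nu -> 0 < Lam -> 0 < xiL -> gcub s nu Lam xiL = 0 ->
  (forall x, x < 0 ->
     is_derive f x (f1 x) /\ is_derive f1 x (f2 x) /\ is_derive f2 x (f3 x)) ->
  (forall x, x < 0 -> 0 = f x - (1 + s) * nu * f1 x - Lam * f2 x + s * nu * Lam * f3 x) ->
  filterlim f (at_left 0) (locally fm0) ->
  filterlim f1 (at_left 0) (locally f1m0) ->
  filterlim f2 (at_left 0) (locally f2m0) ->
  is_lim f m_infty 0 ->
  s * nu * Lam * xiL * f2m0 - Lam * (xiL + s * nu) * f1m0 + xiL ^ 2 * fm0 = 0.
Proof.
  intros hs hnu hLam hxiL hgL derivs ode lim_f lim_f1 lim_f2 lim_inf.
  destruct (char_roots_left s nu Lam xiL hs hnu hLam hxiL hgL)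
    as (a & b & [Hab Hbc] & V1 & V2 & V3).
  assert (Hc : 0 < 1 / xiL) by (apply Rdiv_lt_0_compat; lra).
  assert (Hmode : factor_op a b fm0 (- f1m0) f2m0 = 0).
  { apply (decaying_top_mode (- 1 / (s * nu)) (- (1 + s) * nu / (s * nu * Lam))
             (1 / (s * nu * Lam)) fm0 (- f1m0) f2m0 (fun y => f (- y)) (fun y => - f1 (- y))
             (fun y => f2 (- y)) (fun y => - f3 (- y))) with (c := 1 / xiL);
      try assumption.
    - intros x Hx. destruct (derivs (- x) ltac:(lra)) as [D0 [D1 D2]].
      split; [| split].
      + exact (is_derive_reflect _ _ _ D0).
      + exact (is_derive_reflect_opp _ _ _ D1).
      + exact (is_derive_reflect _ _ _ D2).
    - intros x Hx.
      transitivity ((- 1 / (s * nu * Lam))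
        * (f (- x) - (1 + s) * nu * f1 (- x) - Lam * f2 (- x) + s * nu * Lam * f3 (- x))).
      + field. nra.
      + rewrite <- (ode (- x)) by lra. ring.
    - exact (filterlim_reflect_right _ _ lim_f).
    - exact (filterlim_reflect_right_opp _ _ lim_f1).
    - exact (filterlim_reflect_right _ _ lim_f2).
    - apply is_lim_reflect, lim_inf. }
  assert (Hsum : a + b = - 1 / (s * nu) - 1 / xiL) by lra.
  assert (Hprod : a * b = xiL / (s * nu * Lam)).
  { apply (Rmult_eq_reg_r (1 / xiL)); [rewrite V3; field; nra | lra]. }
  unfold factor_op in Hmode. rewrite Hsum, Hprod in Hmode.
  transitivity (s * nu * Lam * xiL
                * (f2m0 - (- 1 / (s * nu) - 1 / xiL) * - f1m0 + xiL / (s * nu * Lam) * fm0)).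
  - field. nra.
  - rewrite Hmode. ring.
Qed.

Lemma interface_linear_elimination (s nu Lam epsc eps xiL xi1 fm0 fp0 f1 f2 : R) :
  0 < s -> 0 < nu -> 1 < Lam -> 0 < xi1 ->
  fm0 - s * nu * f1 = (Lam * eps - epsc) / (Lam - 1) ->
  fp0 - s * nu * f1 = (Lam * eps - epsc) / (Lam - 1) ->
  f1 = - (fp0 - eps) / xi1 -> f2 = (fp0 - eps) / xi1 ^ 2 ->
  s * nu * Lam * xiL * f2 - Lam * (xiL + s * nu) * f1 + xiL ^ 2 * fm0 = 0 ->
  let P := s * nu * Lam * xiL + Lam * xiL * xi1 + s * nu * Lam * xi1 + xiL ^ 2 * xi1 ^ 2 in
  eps * (P + (Lam - 1) * (xi1 + s * nu) * xi1 * xiL ^ 2) = epsc * P.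
Proof.
  intros hs hnu hLam hxi1 bcm bcp Hf1 Hf2 Hleft P.
  set (k := s * nu) in *.
  set (A := (Lam * eps - epsc) / (Lam - 1)) in *.
  set (d := fp0 - eps) in *.
  assert (Hright : d * (xi1 + k) = (A - eps) * xi1).
  { rewrite <- bcp, Hf1. unfold d. field. lra. }
  assert (Hd : d * P + xi1 ^ 2 * xiL ^ 2 * eps = 0).
  { assert (Hfm : fm0 = eps + d) by (unfold d; lra).
    rewrite Hf1, Hf2, Hfm in Hleft.
    transitivity (xi1 ^ 2 * (k * Lam * xiL * (d / xi1 ^ 2) - Lam * (xiL + k) * (- d / xi1)
                              + xiL ^ 2 * (eps + d))).
    - unfold P. field. lra.
    - rewrite Hleft. ring. }
  assert (HA : (A - eps) * P = - (xi1 + k) * xi1 * xiL ^ 2 * eps).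
  { apply (Rmult_eq_reg_l xi1); [| lra].
    transitivity ((xi1 + k) * (d * P)).
    - replace (xi1 * ((A - eps) * P)) with ((A - eps) * xi1 * P) by ring.
      rewrite <- Hright. ring.
    - replace (d * P) with (- (xi1 ^ 2 * xiL ^ 2 * eps)) by lra. ring. }
  replace epsc with (Lam * eps - (Lam - 1) * A) by (unfold A; field; lra).
  transitivity (eps * P - (Lam - 1) * ((A - eps) * P)).
  - rewrite HA. ring.
  - ring.
Qed.

Lemma interface_eps_ratio (s nu Lam epsc eps xiL xi1 fm0 fp0 f1 f2 : R) :
  0 < s -> 0 < nu -> 1 < Lam -> 0 < epsc -> 0 < xiL -> 0 < xi1 ->
  gcub s nu Lam xiL = 0 ->
  fm0 - s * nu * f1 = (Lam * eps - epsc) / (Lam - 1) ->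
  fp0 - s * nu * f1 = (Lam * eps - epsc) / (Lam - 1) ->
  f1 = - (fp0 - eps) / xi1 -> f2 = (fp0 - eps) / xi1 ^ 2 ->
  s * nu * Lam * xiL * f2 - Lam * (xiL + s * nu) * f1 + xiL ^ 2 * fm0 = 0 ->
  eps / epsc =
    (nu * (1 + s + s * Lam / (xi1 * xiL)) + xi1 + xiL)
    / (nu * (1 + s * Lam + s * Lam / (xi1 * xiL)) + Lam * xi1 + xiL).
Proof.
  intros hs hnu hLam hepsc hxiL hxi1 hgL bcm bcp Hf1 Hf2 Hleft.
  set (P := s * nu * Lam * xiL + Lam * xiL * xi1 + s * nu * Lam * xi1 + xiL ^ 2 * xi1 ^ 2).
  set (X := (Lam - 1) * (xi1 + s * nu) * xi1 * xiL ^ 2).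
  assert (Hcross : eps * (P + X) = epsc * P)
    by exact (interface_linear_elimination s nu Lam epsc eps xiL xi1 fm0 fp0 f1 f2
                hs hnu hLam hxi1 bcm bcp Hf1 Hf2 Hleft).
  set (Nn := nu * (1 + s + s * Lam / (xi1 * xiL)) + xi1 + xiL).
  set (Dd := nu * (1 + s * Lam + s * Lam / (xi1 * xiL)) + Lam * xi1 + xiL).
  assert (HP : P = xi1 * xiL ^ 2 * Nn).
  { transitivity (xi1 * xiL ^ 2 * Nn - xi1 * gcub s nu Lam xiL).
    - unfold P, Nn, gcub. field. lra.
    - rewrite hgL. ring. }
  assert (HPX : P + X = xi1 * xiL ^ 2 * Dd).
  { transitivity (xi1 * xiL ^ 2 * Dd - xi1 * gcub s nu Lam xiL).
    - unfold P, X, Dd, gcub. field. lra.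
    - rewrite hgL. ring. }
  assert (HDd : 0 < Dd).
  { assert (0 < s * Lam / (xi1 * xiL)) by (apply Rdiv_lt_0_compat; nra).
    assert (0 < nu * (1 + s * Lam + s * Lam / (xi1 * xiL))) by (apply Rmult_lt_0_compat; nra).
    unfold Dd. nra. }
  assert (Hratio : eps * Dd = epsc * Nn).
  { assert (0 < xi1 * xiL ^ 2) by (apply Rmult_lt_0_compat; [| apply pow_lt]; lra).
    apply (Rmult_eq_reg_l (xi1 * xiL ^ 2)); [| lra].
    transitivity (eps * (P + X)); [rewrite HPX; ring | rewrite Hcross, HP; ring]. }
  replace (eps / epsc) with (eps * Dd / (epsc * Dd)) by (field; lra).
  rewrite Hratio. field. lra.
Qed.

Theorem theorem1
  (s nu Lam epsc eps : R)
  (hs : 0 < s) (hnu : 0 < nu) (hLam : 1 < Lam) (hepsc : 0 < epsc)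
  (xiL xi1 : R)
  (hxiL : 0 < xiL) (hgL : gcub s nu Lam xiL = 0)
  (hxi1 : 0 < xi1) (hg1 : gcub s nu 1 xi1 = 0)
  (f f1 f2 f3 : R -> R)
  (* f is three times differentiable on (-oo,0), with derivatives f1, f2, f3 *)
  (dneg : forall x, x < 0 ->
     is_derive f x (f1 x) /\ is_derive f1 x (f2 x) /\ is_derive f2 x (f3 x))
  (* f is three times differentiable on [0,oo) (one-sided at 0) *)
  (dpos : forall x, 0 < x ->
     is_derive f x (f1 x) /\ is_derive f1 x (f2 x) /\ is_derive f2 x (f3 x))
  (dzero : is_right_derive f 0 (f1 0) /\ is_right_derive f1 0 (f2 0)
           /\ is_right_derive f2 0 (f3 0))
  (* one-sided limits of f, f', f'' at 0 *)
  (fm0 fp0 f1m0 f1p0 f2m0 f2p0 : R)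
  (lfm : filterlim f (at_left 0) (locally fm0))
  (lfp : filterlim f (at_right 0) (locally fp0))
  (lf1m : filterlim f1 (at_left 0) (locally f1m0))
  (lf1p : filterlim f1 (at_right 0) (locally f1p0))
  (lf2m : filterlim f2 (at_left 0) (locally f2m0))
  (lf2p : filterlim f2 (at_right 0) (locally f2p0))
  (* the ODEs *)
  (odeneg : forall x, x < 0 ->
     0 = f x - (1 + s) * nu * f1 x - Lam * f2 x + s * nu * Lam * f3 x)
  (odepos : forall x, 0 <= x ->
     0 = f x - eps - (1 + s) * nu * f1 x - f2 x + s * nu * f3 x)
  (* matching and boundary conditions *)
  (bc1 : fm0 - s * nu * f1m0 = (Lam * eps - epsc) / (Lam - 1))
  (bc2 : fp0 - s * nu * f1p0 = (Lam * eps - epsc) / (Lam - 1))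
  (bc3 : f1m0 = f1p0)
  (bc4 : f2m0 = f2p0)
  (linf_m : is_lim f m_infty 0)
  (linf_p : is_lim f p_infty eps) :
  let lam := 1 + 1 / s in
  eps / epsc =
    (nu * (1 + s + s * Lam / (xi1 * xiL)) + xi1 + xiL)
    / (nu * (1 + s * Lam + s * Lam / (xi1 * xiL)) + Lam * xi1 + xiL)
  /\
  (nu * (1 + s + s * Lam / (xi1 * xiL)) + xi1 + xiL)
    / (nu * (1 + s * Lam + s * Lam / (xi1 * xiL)) + Lam * xi1 + xiL)
  =
    (nu / (lam - 1) * (Lam / (xi1 * xiL) + lam) + xi1 + xiL)
    / (nu / (lam - 1) * (Lam + Lam / (xi1 * xiL) + lam - 1) + Lam * xi1 + xiL).
Proof.
  intros lam.
  destruct (right_interface_relations s nu eps xi1 fp0 f1p0 f2p0 f f1 f2 f3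
              hs hnu hxi1 hg1 dpos (fun x hx => odepos x (Rlt_le _ _ hx))
              lfp lf1p lf2p linf_p) as [Hf1 Hf2].
  assert (Hleft := left_interface_relation s nu Lam xiL fm0 f1m0 f2m0 f f1 f2 f3
                     hs hnu ltac:(lra) hxiL hgL dneg odeneg lfm lf1m lf2m linf_m).
  rewrite bc3, bc4 in Hleft. rewrite bc3 in bc1.
  split.
  - exact (interface_eps_ratio s nu Lam epsc eps xiL xi1 fm0 fp0 f1p0 f2p0
             hs hnu hLam hepsc hxiL hxi1 hgL bc1 bc2 Hf1 Hf2 Hleft).
  - unfold lam.
    replace (nu / (1 + 1 / s - 1)) with (s * nu) by (field; lra).
    f_equal; field; lra.
Qed.
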